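(* Let $K$ be any quadratic field. There is a constant $C>0$ depending only on $K$ such that for every natural number $f$, \[\mathsf{D}(\mathrm{PrinCl}(\mathcal{O}_f))\le C\,\frac{f}{\ell(f)}.\]
   Context: For a quadratic field $K$ with ring of integers $\mathcal{O}_K$ and $f\in\mathbb{N}$, the pre-class group is $\mathrm{PreCl}(\mathcal{O}_f):=(\mathcal{O}_K/f\mathcal{O}_K)^{\times}/\langle\text{images of integers coprime to } f\rangle$. Let $\mathcal{U}_f$ be the image of the unit group $\mathcal{O}_K^{\times}$ in $\mathrm{PreCl}(\mathcal{O}_f)$, $\ell(f):=\#\mathcal{U}_f$, and $\mathrm{PrinCl}(\mathcal{O}_f):=\mathrm{PreCl}(\mathcal{O}_f)/\mathcal{U}_f$ (equivalently, $(\mathcal{O}_K/f\mathcal{O}_K)^\times$ modulo the images of integers coprime to $f$ and of units of $\mathcal{O}_K$). For a finite abelian group $G$, the Davenport constant $\mathsf{D}(G)$ is the least positive integer $D$ such that every sequence $g_1,\dots,g_D$ of elements of $G$ has a nonempty subsequence whose product is the identity. *)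

From mathcomp Require Import all_boot all_order all_algebra.
From mathcomp Require Import boolp.
Unset Printing Implicit Defensive.
Import Order.TTheory GRing.Theory Num.Theory.
Local Open Scope ring_scope.

(* Every quadratic field is K = Q(sqrt d) for a unique
   squarefree integer d <> 0, 1.  Its ring of integers is O_K = Z[w] with
   w = (1 + sqrt d)/2 if d = 1 mod 4 and w = sqrt d otherwise; w satisfies
   w^2 = qt * w + qn.  We model O_K as Z x Z, (a, b) <-> a + b w.         *)

Definition squarefree_int (d : int) : Prop :=
  forall k : nat, (k * k %| `|d|)%N -> k = 1%N.

Definition quad_field_disc (d : int) : Prop :=
  [/\ d != 0, d != 1 & squarefree_int d].

Definition qt (d : int) : int := if (d %% 4)%Z == 1 then 1 else 0.
Definition qn (d : int) : int := if (d %% 4)%Z == 1 then ((d - 1) %/ 4)%Z else d.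

Definition mulO (d : int) (u v : int * int) : int * int :=
  (u.1 * v.1 + qn d * u.2 * v.2, u.1 * v.2 + u.2 * v.1 + qt d * u.2 * v.2).

Definition unitO (d : int) (u : int * int) : Prop :=
  exists v : int * int, mulO d u v = (1, 0).

(* The residue ring O_K / f O_K, with f = m.+1 >= 1; residues of a + b w
   are pairs (a mod f, b mod f).                                        *)

Definition Res (m : nat) : finType := ('I_m.+1 * 'I_m.+1)%type.

Definition toRes (m : nat) (u : int * int) : Res m :=
  (inZp `|(u.1 %% (m.+1)%:Z)%Z|, inZp `|(u.2 %% (m.+1)%:Z)%Z|).

Definition ofRes (m : nat) (x : Res m) : int * int :=
  ((nat_of_ord x.1)%:Z, (nat_of_ord x.2)%:Z).

Definition mulR (d : int) (m : nat) (x y : Res m) : Res m :=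
  toRes m (mulO d (ofRes m x) (ofRes m y)).

Definition oneR (m : nat) : Res m := toRes m (1, 0).

Definition unitR (d : int) (m : nat) (x : Res m) : bool :=
  [exists y, mulR d m x y == oneR m].

Definition prodR (d : int) (m : nat) (s : seq (Res m)) : Res m :=
  foldr (mulR d m) (oneR m) s.

Definition intImg (m : nat) : {set Res m} :=
  [set x | `[< exists k : int, coprime `|k| m.+1 /\ x = toRes m (k, 0) >]].

Definition unitImg (d : int) (m : nat) : {set Res m} :=
  [set x | `[< exists u : int * int, unitO d u /\ x = toRes m u >]].

Definition subgrp_closed (d : int) (m : nat) (A S : {set Res m}) : bool :=
  [&& oneR m \in S,
      [forall x in S, forall y in S, mulR d m x y \in S],
      [forall x in S, forall y, (mulR d m x y == oneR m) ==> (y \in S)]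
    & A \subset S].

Definition gen_subgrp (d : int) (m : nat) (A : {set Res m}) : {set Res m} :=
  \bigcap_(S : {set Res m} | subgrp_closed d m A S) S.

(* Z_f : the subgroup defining PreCl ; H_f : the one defining PrinCl *)
Definition Zsub (d : int) (m : nat) : {set Res m} := gen_subgrp d m (intImg m).
Definition Hsub (d : int) (m : nat) : {set Res m} :=
  gen_subgrp d m (intImg m :|: unitImg d m).

(* class of x in PreCl = (O_K/fO_K)^x / Z_f *)
Definition preCl_class (d : int) (m : nat) (x : Res m) : {set Res m} :=
  [set y | [exists z in Zsub d m, y == mulR d m x z]].

(* ell(f) = # U_f, the number of classes in PreCl hit by units of O_K *)
Definition ell (d : int) (m : nat) : nat :=
  #|[set preCl_class d m x | x in unitImg d m]|.

(* D is a "zero-sum length" for PrinCl = (O_K/fO_K)^x / H_f : every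
   sequence of D elements of PrinCl (lifted to units of O_K/fO_K) has a
   nonempty subsequence whose product is the identity class, i.e. lies
   in H_f. *)
Definition prinCl_zs (d : int) (m : nat) (D : nat) : Prop :=
  forall s : seq (Res m), size s = D -> all (unitR d m) s ->
    exists msk : bitseq, [/\ size msk = size s, has id msk &
                             prodR d m (mask msk s) \in Hsub d m].

(* Davenport constant: the least positive such D (0 if none, which never
   happens for a finite group). *)
Definition davenport_prinCl (d : int) (m : nat) : nat :=
  match pselect (exists D : nat, `[< (0 < D)%N /\ prinCl_zs d m D >]) with
  | left h => ex_minn h
  | right _ => 0%N
  end.

(* Let s be the number of odd primes p | f with p not dividing d, and let
   Phi : (O_K/fO_K)^x -> F_2^s collect the quadratic characters x |-> (N x / p).
   Integers coprime to f have square norms and units of O_K have norm +-1, so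
   the group H_f generated by them lies in K_f := Phi^-1 {0, w}, w the common
   value of Phi on norm -1 elements.  Phi is onto (Chinese remainders), hence
   2^s #K_f <= 2 f^2.  Among any s + 1 units some nonempty subproduct lies in
   K_f (linear dependence in F_2^s), and among any #K_f / #H_f elements of K_f
   some nonempty subproduct lies in H_f (pigeonhole on cosets), so
   D(PrinCl) <= (s + 1) #K_f / #H_f.  The classes of units in PreCl are
   disjoint cosets of Z_f inside H_f, so #H_f >= ell(f) phi(f), and
   phi(f) >= f (2/3)^s / 2^#{p | 2d}.  Together, D(PrinCl) ell(f) <= 8 2^#{p | 2d} f. *)

From mathcomp Require Import all_boot all_order all_algebra all_field.
From mathcomp Require Import boolp zify ring.
Set Implicit Arguments.
Unset Strict Implicit.
Unset Printing Implicit Defensive.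
Import Order.TTheory GRing.Theory Num.Theory.
Local Open Scope ring_scope.

Section IntCongruence.
Variable M : int.
Implicit Types a b : int.

Lemma eqz_modD a a' b b' : (a = a' %[mod M])%Z -> (b = b' %[mod M])%Z ->
  (a + b = a' + b' %[mod M])%Z.
Proof. by move=> ea eb; rewrite -modzDm ea eb modzDm. Qed.

Lemma eqz_modN a a' : (a = a' %[mod M])%Z -> (- a = - a' %[mod M])%Z.
Proof. by move=> ea; rewrite -modzNm ea modzNm. Qed.

Lemma eqz_modM a a' b b' : (a = a' %[mod M])%Z -> (b = b' %[mod M])%Z ->
  (a * b = a' * b' %[mod M])%Z.
Proof. by move=> ea eb; rewrite -modzMm ea eb modzMm. Qed.

Lemma eqz_mod_dvdW M' a b : (M' %| M)%Z -> (a = b %[mod M])%Z -> (a = b %[mod M'])%Z.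
Proof.
move=> dvdM /eqP; rewrite eqz_mod_dvd => /(dvdz_trans dvdM).
by rewrite -eqz_mod_dvd => /eqP.
Qed.

End IntCongruence.

Lemma eqz_mod_nat (M a b : nat) : a = b %[mod M] -> (a%:Z = b%:Z %[mod M%:Z])%Z.
Proof. by rewrite !modz_nat => ->. Qed.

Ltac eqz_mod_congr :=
  repeat first [eassumption | apply: eqz_modD | apply: eqz_modN | apply: eqz_modM | done].

Definition normO (d : int) (u : int * int) : int :=
  u.1 * u.1 + qt d * u.1 * u.2 - qn d * u.2 * u.2.

Definition conjO (d : int) (u : int * int) : int * int := (u.1 + qt d * u.2, - u.2).

Definition eqO_mod (M : int) (u v : int * int) : Prop :=
  (u.1 = v.1 %[mod M])%Z /\ (u.2 = v.2 %[mod M])%Z.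

Section IntegerRing.
Variable d : int.
Implicit Types u v w : int * int.

Lemma mulOC u v : mulO d u v = mulO d v u.
Proof. by rewrite /mulO; congr (_, _); ring. Qed.

Lemma mulOA u v w : mulO d u (mulO d v w) = mulO d (mulO d u v) w.
Proof. by rewrite /mulO /=; congr (_, _); ring. Qed.

Lemma mul1O u : mulO d (1, 0) u = u.
Proof. by case: u => a b; rewrite /mulO /=; congr (_, _); ring. Qed.

Lemma normOM u v : normO d (mulO d u v) = normO d u * normO d v.
Proof. by rewrite /normO /mulO /=; ring. Qed.

Lemma normO1 : normO d (1, 0) = 1.
Proof. by rewrite /normO /=; ring. Qed.

Lemma mulO_conj u : mulO d u (conjO d u) = (normO d u, 0).
Proof. by rewrite /normO /mulO /conjO /=; congr (_, _); ring. Qed.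

Lemma normO_int (k : int) : normO d (k, 0) = k ^+ 2.
Proof. by rewrite /normO /=; ring. Qed.

Lemma mulO_mod M u u' v v' : eqO_mod M u u' -> eqO_mod M v v' ->
  eqO_mod M (mulO d u v) (mulO d u' v').
Proof. by move=> [? ?] [? ?]; split; rewrite /mulO /=; eqz_mod_congr. Qed.

Lemma normO_mod M u u' : eqO_mod M u u' -> (normO d u = normO d u' %[mod M])%Z.
Proof. by move=> [? ?]; rewrite /normO; eqz_mod_congr. Qed.

End IntegerRing.

Section ResidueRing.
Variables (d : int) (m : nat).
Local Notation f := (m.+1)%:Z.
Local Notation mulR := (mulR d m).
Local Notation one := (oneR m).
Local Notation unit := (unitR d m).
Implicit Types (u v : int * int) (x y z : Res m).

Lemma toRes_mod u v : eqO_mod f u v -> toRes m u = toRes m v.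
Proof. by case=> e1 e2; rewrite /toRes e1 e2. Qed.

Lemma ofRes_toRes u : eqO_mod f (ofRes m (toRes m u)) u.
Proof.
have toRes_coord (a : int) : ((`|(a %% f)%Z| %% m.+1)%N%:Z = a %[mod f])%Z.
  have a_ge0 : 0 <= (a %% f)%Z by exact: modz_ge0.
  by rewrite modn_small ?gez0_abs ?modz_mod // -ltz_nat gez0_abs ?ltz_pmod.
by split; apply: toRes_coord.
Qed.

Lemma ofResK x : toRes m (ofRes m x) = x.
Proof.
case: x => i j; rewrite /toRes /ofRes /= !modz_nat !absz_nat.
by congr (_, _); apply: val_inj; rewrite /= !modn_small.
Qed.

Lemma mulR_toRes u v : mulR (toRes m u) (toRes m v) = toRes m (mulO d u v).
Proof. by apply: toRes_mod; apply: mulO_mod; apply: ofRes_toRes. Qed.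

Lemma mulRC x y : mulR x y = mulR y x.
Proof. by rewrite /mulR mulOC. Qed.

Lemma mulRA x y z : mulR x (mulR y z) = mulR (mulR x y) z.
Proof. by rewrite -[x]ofResK -[y]ofResK -[z]ofResK !mulR_toRes mulOA. Qed.

Lemma mul1R x : mulR one x = x.
Proof. by rewrite -[x]ofResK mulR_toRes mul1O. Qed.

Lemma mulR1 x : mulR x one = x.
Proof. by rewrite mulRC mul1R. Qed.

Lemma unitRP x : reflect (exists y, mulR x y = one) (unit x).
Proof. by apply: (iffP existsP) => -[y /eqP]; exists y. Qed.

Lemma unitR1 : unit one.
Proof. by apply/unitRP; exists one; rewrite mul1R. Qed.

Lemma unitRM x y : unit x -> unit y -> unit (mulR x y).
Proof.
move=> /unitRP[x' xx'] /unitRP[y' yy']; apply/unitRP; exists (mulR x' y').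
by rewrite mulRA -[mulR (mulR x y) x']mulRA [mulR y x']mulRC mulRA xx' mul1R.
Qed.

Lemma mulR_eq1_unit x y : mulR x y = one -> unit y.
Proof. by move=> xy; apply/unitRP; exists x; rewrite mulRC. Qed.

Lemma mulRI x : unit x -> injective (mulR x).
Proof.
move=> /unitRP[x' xx'] y z e.
by rewrite -[y]mul1R -[z]mul1R -xx' [mulR x x']mulRC -!mulRA e.
Qed.

Lemma unitR_toRes_coprime u : coprimez (normO d u) f -> unit (toRes m u).
Proof.
case/coprimezP => -[a b] /= bezout.
apply/unitRP; exists (toRes m (mulO d (conjO d u) (a, 0))).
rewrite mulR_toRes mulOA mulO_conj /oneR; apply: toRes_mod; split => /=.
  by rewrite -bezout [a * _ + _]addrC modzMDl; congr (_ %% _)%Z; ring.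
by congr (_ %% _)%Z; ring.
Qed.

Lemma unitR_toRes_unitO u : unitO d u -> unit (toRes m u).
Proof. by case=> v uv; apply/unitRP; exists (toRes m v); rewrite mulR_toRes uv. Qed.

End ResidueRing.

Local Close Scope ring_scope.

Lemma mask_window (T : Type) (s : seq T) i j : i <= j <= size s ->
  mask (nseq i false ++ nseq (j - i) true ++ nseq (size s - j) false) s =
  drop i (take j s).
Proof.
case/andP=> le_ij le_js.
have size_ij : size (take i (take j s)) = i by rewrite !size_takel // (leq_trans le_ij).
rewrite -[s in mask _ s](cat_take_drop j) -[take j s](cat_take_drop i) -catA.
rewrite mask_cat ?size_nseq // mask_cat ?size_nseq ?size_drop ?size_takel //.
by rewrite drop_size_cat // !mask_false mask_true ?size_drop ?size_takel // cats0.
Qed.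

Definition unitsR (d : int) (m : nat) : {set Res m} := [set x | unitR d m x].

Definition subprod_in (d : int) (m : nat) (S : {set Res m}) (s : seq (Res m)) : Prop :=
  exists msk : bitseq, [/\ size msk = size s, has id msk & prodR d m (mask msk s) \in S].
Arguments subprod_in : clear implicits.

Section Subgroups.
Variables (d : int) (m : nat).
Local Notation mulR := (mulR d m).
Local Notation one := (oneR m).
Local Notation unit := (unitR d m).
Local Notation prodR := (prodR d m).
Local Notation gen := (gen_subgrp d m).
Local Notation subprod_in := (subprod_in d m).
Implicit Types (A S H K : {set Res m}) (x y : Res m) (s t : seq (Res m)).

Lemma subgrp_closedP A S : reflect [/\ one \in S,
   forall x y, x \in S -> y \in S -> mulR x y \in S,
   forall x y, x \in S -> mulR x y = one -> y \in S & A \subset S]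
  (subgrp_closed d m A S).
Proof.
apply: (iffP and4P) => -[S1 SM SV AS]; split => //.
- by move=> x y xS yS; move/forall_inP: SM => /(_ x xS) /forall_inP /(_ y yS).
- by move=> x y xS /eqP; move/forall_inP: SV => /(_ x xS) /forallP /(_ y) /implyP.
- by apply/forall_inP => x xS; apply/forall_inP => y yS; apply: SM.
- by apply/forall_inP => x xS; apply/forallP => y; apply/implyP => /eqP; apply: SV.
Qed.

Lemma gen_subgrp_min A S : subgrp_closed d m A S -> gen A \subset S.
Proof. exact: bigcap_inf. Qed.

Lemma gen_subgrp_closed A : subgrp_closed d m A (gen A).
Proof.
apply/subgrp_closedP; split.
- by apply/bigcapP => S /subgrp_closedP[].
- move=> x y /bigcapP xG /bigcapP yG; apply/bigcapP => S closedS.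
  by case/subgrp_closedP: (closedS) => _ SM _ _; apply: SM; [apply: xG | apply: yG].
- move=> x y /bigcapP xG xy; apply/bigcapP => S closedS.
  by case/subgrp_closedP: (closedS) => _ _ SV _; apply: SV xy; apply: xG.
- by apply/subsetP => x xA; apply/bigcapP => S /subgrp_closedP[_ _ _ /subsetP]; apply.
Qed.

Lemma gen_subgrp1 A : one \in gen A.
Proof. by case/subgrp_closedP: (gen_subgrp_closed A). Qed.

Lemma gen_subgrpM A x y : x \in gen A -> y \in gen A -> mulR x y \in gen A.
Proof. by case/subgrp_closedP: (gen_subgrp_closed A) => _ GM _ _; apply: GM. Qed.

Lemma gen_subgrpV A x y : x \in gen A -> mulR x y = one -> y \in gen A.
Proof. by case/subgrp_closedP: (gen_subgrp_closed A) => _ _ GV _; apply: GV. Qed.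

Lemma sub_gen_subgrp A : A \subset gen A.
Proof. by case/subgrp_closedP: (gen_subgrp_closed A). Qed.

Lemma gen_subgrpS A S : A \subset S -> gen A \subset gen S.
Proof.
move=> AS; apply: gen_subgrp_min; case/subgrp_closedP: (gen_subgrp_closed S) => G1 GM GV SG.
by apply/subgrp_closedP; split => //; apply: subset_trans SG.
Qed.

Lemma gen_subgrp_units A : A \subset unitsR d m -> gen A \subset unitsR d m.
Proof.
move=> Aunits; apply: gen_subgrp_min; apply/subgrp_closedP; split => //.
- by rewrite inE unitR1.
- by move=> x y; rewrite !inE; apply: unitRM.
- by move=> x y _; rewrite inE => /mulR_eq1_unit.
Qed.

Lemma gen_subgrp_inv A x : A \subset unitsR d m -> x \in gen A ->
  exists2 y, mulR x y = one & y \in gen A.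
Proof.
move=> Aunits xG; have /unitRP[y xy] : unit x.
  by have := subsetP (gen_subgrp_units Aunits) x xG; rewrite inE.
by exists y => //; apply: gen_subgrpV xy.
Qed.

Lemma prodR_cat s t : prodR (s ++ t) = mulR (prodR s) (prodR t).
Proof. by elim: s => [|x s IHs] /=; rewrite ?mul1R // IHs mulRA. Qed.

Lemma prodR_closed S s : one \in S -> (forall x y, x \in S -> y \in S -> mulR x y \in S) ->
  all (mem S) s -> prodR s \in S.
Proof.
move=> S1 SM; elim: s => [|x s IHs] //= /andP[xS sS].
by apply: SM => //; apply: IHs.
Qed.

Lemma prodR_unit s : all unit s -> unit (prodR s).
Proof.
elim: s => [_|x s IHs /= /andP[x_unit s_units]]; first exact: unitR1.
by apply: unitRM => //; apply: IHs.
Qed.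

Lemma subprod_in_window A t i j h1 h2 :
  A \subset unitsR d m -> all unit t -> i < j <= size t ->
  h1 \in gen A -> h2 \in gen A ->
  mulR (prodR (take i t)) h1 = mulR (prodR (take j t)) h2 ->
  subprod_in (gen A) t.
Proof.
move=> Aunits t_units /andP[lt_ij le_jt] h1G h2G e.
set w := drop i (take j t).
have take_j : take j t = take i t ++ w.
  by rewrite -{1}(cat_take_drop i (take j t)) take_takel // ltnW.
have unit_i : unit (prodR (take i t)).
  by apply: prodR_unit; apply/allP => x /mem_take /(allP t_units).
move: e; rewrite take_j prodR_cat -mulRA => /(mulRI unit_i) h1_eq.
have [h2' h2h2' h2'G] := gen_subgrp_inv Aunits h2G.
exists (nseq i false ++ nseq (j - i) true ++ nseq (size t - j) false); split.
- by rewrite !size_cat !size_nseq; lia.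
- by rewrite !has_cat !has_nseq /= subn_gt0 lt_ij orbT.
- rewrite mask_window ?le_jt ?(ltnW lt_ij) // -/w.
  have -> : prodR w = mulR h1 h2' by rewrite h1_eq -mulRA h2h2' mulR1.
  exact: gen_subgrpM.
Qed.

(* Otherwise the (size t).+1 cosets of gen A through the partial products of t
   would be pairwise disjoint inside K. *)
Lemma subprod_in_pigeonhole A K t :
  A \subset unitsR d m -> gen A \subset K -> K \subset unitsR d m ->
  one \in K -> (forall x y, x \in K -> y \in K -> mulR x y \in K) ->
  #|K| < (size t).+1 * #|gen A| -> all (mem K) t -> subprod_in (gen A) t.
Proof.
move=> Aunits GK Kunits K1 KM card_K tK.
have t_units : all unit t.
  by apply/allP => x /(allP tK) /(subsetP Kunits); rewrite inE.
pose P (i : 'I_(size t).+1) := prodR (take i t).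
have PK i : P i \in K.
  by apply: prodR_closed => //; apply/allP => x /mem_take /(allP tK).
pose coset (p : 'I_(size t).+1 * Res m) := mulR (P p.1) p.2.
apply: contrapT => no_subprod.
have coset_inj : {in setX [set: 'I_(size t).+1] (gen A) &, injective coset}.
  move=> [i h1] [j h2] /setXP[_ h1G] /setXP[_ h2G]; rewrite /coset /= => e.
  have le_t (k : 'I_(size t).+1) : k <= size t by rewrite -ltnS.
  case: (ltngtP i j) => [lt_ij | lt_ji | /val_inj eq_ij].
  - by case: no_subprod; apply: (subprod_in_window Aunits t_units _ h1G h2G e);
      rewrite lt_ij le_t.
  - by case: no_subprod; apply: (subprod_in_window Aunits t_units _ h2G h1G (esym e));
      rewrite lt_ji le_t.
  - subst j; congr (_, _); apply: mulRI e.
    by apply: prodR_unit; apply/allP => x /mem_take /(allP t_units).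
have : #|coset @: setX [set: 'I_(size t).+1] (gen A)| <= #|K|.
  apply: subset_leq_card; apply/subsetP => y /imsetP[[i h] /setXP[_ hG] ->].
  by apply: KM => //; apply: (subsetP GK).
by rewrite (card_in_imset coset_inj) cardsX cardsT card_ord leqNgt card_K.
Qed.

Lemma block_subproducts (K : {set Res m}) L :
  (forall t, size t = L -> all unit t -> subprod_in K t) ->
  forall k s, size s = L * k -> all unit s ->
  exists bs, [/\ size bs = k, all (mem K) bs &
    forall mu, size mu = k -> exists msk, [/\ size msk = size s,
      has id mu -> has id msk & prodR (mask msk s) = prodR (mask mu bs)]].
Proof.
move=> blockK; elim=> [|k IHk] s size_s s_units.
  exists [::]; split => // mu; rewrite muln0 in size_s; move/size0nil: size_s => ->.
  by move/size0nil => ->; exists [::].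
have size_hd : size (take L s) = L by rewrite size_takel // size_s leq_pmulr.
have size_tl : size (drop L s) = L * k by rewrite size_drop size_s mulnS addKn.
move: s_units; rewrite -(cat_take_drop L s) all_cat => /andP[hd_units tl_units].
have [m0 [size_m0 has_m0 m0K]] := blockK _ size_hd hd_units.
have [bs [size_bs bsK bs_masks]] := IHk _ size_tl tl_units.
exists (prodR (mask m0 (take L s)) :: bs); split => /=; [by rewrite size_bs | by rewrite m0K |].
case=> [|b mu] //= [size_mu].
have [msk [size_msk has_msk prod_msk]] := bs_masks _ size_mu.
have size_b : size (if b then m0 else nseq L false) = size (take L s).
  by case: b; rewrite ?size_nseq ?size_m0 ?size_hd.
exists ((if b then m0 else nseq L false) ++ msk); split.
- by rewrite !size_cat size_msk size_b.
- by clear size_b; rewrite has_cat; case: b => /= [_|/has_msk ->]; rewrite ?has_m0 ?orbT.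
- rewrite mask_cat // prodR_cat prod_msk.
  by case: b {size_b} => //=; rewrite mask_false mul1R.
Qed.

Lemma subprod_in_blocks (H K : {set Res m}) L n s :
  (forall t, size t = L -> all unit t -> subprod_in K t) ->
  (forall t, size t = n -> all (mem K) t -> subprod_in H t) ->
  size s = L * n -> all unit s -> subprod_in H s.
Proof.
move=> blockK blocksH size_s s_units.
have [bs [size_bs bsK bs_masks]] := block_subproducts blockK size_s s_units.
have [mu [size_mu has_mu prod_mu]] := blocksH _ size_bs bsK.
have [msk [size_msk has_msk prod_msk]] := bs_masks mu (etrans size_mu size_bs).
by exists msk; split; rewrite ?prod_msk ?has_msk.
Qed.

Lemma davenport_prinCl_le N : 0 < N -> prinCl_zs d m N -> davenport_prinCl d m <= N.
Proof.
move=> N_gt0 zsN; rewrite /davenport_prinCl; case: pselect => [ex|[]].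
  by case: ex_minnP => k _; apply; apply/asboolP.
by exists N; apply/asboolP.
Qed.

End Subgroups.

Local Open Scope ring_scope.


Lemma sum_mask (V : nmodType) (msk : bitseq) (v : seq V) : size msk = size v ->
  \sum_(x <- mask msk v) x = \sum_(j < size v) (if nth false msk j then v`_j else 0).
Proof.
elim: v msk => [|x v IHv] [|b msk] //=; first by rewrite big_nil big_ord0.
case=> size_msk; rewrite big_ord_recl /=.
by case: b; rewrite ?big_cons IHv // add0r.
Qed.

Lemma F2_cases (x : 'F_2) : x = 0 \/ x = 1.
Proof. by case: x => [[|[|k]] ?]; [left|right|]; rewrite //; apply: val_inj. Qed.

Lemma F2_addrr n (v : 'rV['F_2]_n) : v + v = 0.
Proof.
apply/rowP => i; rewrite !mxE.
by case: (F2_cases (v 0 i)) => ->; rewrite ?addr0 //; apply: val_inj.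
Qed.

(* s + 1 vectors of F_2^s are linearly dependent, and over F_2 a nontrivial
   dependence relation is a nonempty zero subsum. *)
Lemma F2_zero_subsum s (v : seq 'rV['F_2]_s) : size v = s.+1 ->
  exists msk, [/\ size msk = s.+1, has id msk & \sum_(x <- mask msk v) x = 0].
Proof.
move=> size_v; pose M := \matrix_(i < s.+1) v`_i.
have : kermx M != 0 by rewrite kermx_eq0 -row_leq_rank -ltnNge ltnS rank_leq_col.
case/matrix0Pn => [i [j u_ij]]; set u := row i (kermx M).
have uM : u *m M = 0 by rewrite -row_mul mulmx_ker row0.
exists (mkseq (fun k => u 0 (inord k) != 0) s.+1); split; first by rewrite size_mkseq.
  apply/hasP; exists (u 0 (inord j) != 0); last by rewrite inord_val mxE.
  by apply/mapP; exists (nat_of_ord j); rewrite // mem_iota /= ltn_ord.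
rewrite sum_mask ?size_mkseq ?size_v // -[RHS]uM mulmx_sum_row.
apply: eq_bigr => k _; rewrite nth_mkseq // inord_val rowK.
by case: (F2_cases (u 0 k)) => ->; rewrite ?eqxx ?scale0r ?scale1r ?oner_eq0.
Qed.

Section OddFiniteField.
Variable F : finFieldType.
Hypothesis oddF : odd #|F|.
Local Notation e := (#|F|.-1./2).

Lemma two_neq0_odd_card : 2%:R != 0 :> F.
Proof.
apply/negP => two_eq0; have char2 : 2%N \in [pchar F] by apply/andP.
move: oddF (finNzRing_gt1 F); rewrite (card_pprimeChar char2) oddX orbF => /eqP->.
by rewrite expn0.
Qed.

Lemma oppr1_neq1 : -1 != 1 :> F.
Proof.
apply: contraNneq two_neq0_odd_card => eqN11.
by rewrite -[2%:R]/(1 + 1 : F) -{1}eqN11 addNr.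
Qed.

Lemma half_card_gt0 : (0 < e)%N.
Proof. by move: oddF (finNzRing_gt1 F); case: #|F| => [|[|[|q]]]. Qed.

Lemma half_card_double : (e + e)%N = #|F|.-1.
Proof.
rewrite addnn -[RHS]odd_double_half.
by move: oddF (finNzRing_gt1 F); case: #|F| => [|q] //= /negbTE ->.
Qed.

Lemma expf_card_pred (a : F) : a != 0 -> a ^+ #|F|.-1 = 1.
Proof.
move=> a_neq0; apply: (mulfI a_neq0).
by rewrite mulr1 -exprS prednK ?expf_card // (ltn_trans _ (finNzRing_gt1 F)).
Qed.

Lemma expf_half_card (a : F) : a != 0 -> a ^+ e = 1 \/ a ^+ e = -1.
Proof.
move=> a_neq0; have : (a ^+ e - 1) * (a ^+ e + 1) == 0.
  have -> : (a ^+ e - 1) * (a ^+ e + 1) = a ^+ (e + e) - 1 by rewrite exprD; ring.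
  by rewrite half_card_double expf_card_pred // subrr.
by rewrite mulf_eq0 subr_eq0 addr_eq0 => /orP[|] /eqP; [left | right].
Qed.

Lemma exists_non_residue : exists r : F, r ^+ e = -1.
Proof.
suff [r r_neq0 r_non1] : exists2 r : F, r != 0 & r ^+ e != 1.
  by case: (expf_half_card r_neq0) r_non1 => [->|]; [rewrite eqxx | exists r].
apply/exists_inP; rewrite -negb_forall_in; apply/negP => /forall_inP all_residues.
have : (#|[set~ 0%R : F]| <= #|[set x : F | x ^+ e == 1%R]|)%N.
  by apply/subset_leq_card/subsetP => x; rewrite !inE => /all_residues.
have : (#|[set x : F | x ^+ e == 1%R]| <= e)%N.
  rewrite cardE; apply: max_unity_roots; rewrite ?half_card_gt0 ?enum_uniq //.
  by apply/allP => x; rewrite mem_enum inE unity_rootE.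
move: half_card_gt0; rewrite cardsC1 -divn2; set q := #|F|.-1; lia.
Qed.

Lemma card_quadratic_image (c k : F) : k != 0 ->
  (#|F| < 2 * #|[set (c + k * y * y)%R | y : F]|)%N.
Proof.
move=> k_neq0; set I := [set _ | _ : F].
have fibre_le2 z : (#|[set y : F | (c + k * y * y == z)%R]| <= 2)%N.
  have [y0 /eqP y0z|no_y] := pickP (fun y : F => c + k * y * y == z); last first.
    by rewrite (eq_card0 (A := [set y | _])) // => y; rewrite inE no_y.
  have : [set y : F | c + k * y * y == z] \subset [set y0; - y0].
    apply/subsetP => y; rewrite !inE => /eqP yz.
    have : k * ((y - y0) * (y + y0)) == 0.
      by rewrite -(subrr z) -{1}yz -y0z; apply/eqP; ring.
    rewrite !mulf_eq0 (negbTE k_neq0) subr_eq0 addr_eq0 /=.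
    by case/orP => ->; rewrite ?orbT.
  by move/subset_leq_card; rewrite cards2 => /leq_trans; apply; case: (_ != _).
have : (#|F| <= 2 * #|I|)%N.
  rewrite -[#|F|]sum1_card (partition_big (fun y => c + k * y * y) (mem I)) /=; last first.
    by move=> y _; apply/imsetP; exists y.
  rewrite mulnC -sum_nat_const; apply: leq_sum => z _.
  by apply: leq_trans (fibre_le2 z); rewrite sum1_card; apply/eq_leq/eq_card => y; rewrite inE.
rewrite leq_eqVlt => /orP[/eqP eqF|//].
by move: oddF; rewrite eqF oddM.
Qed.

(* Complete the square: 4 r = X^2 - D Y^2 with X = 2a + tb, Y = b, and both
   X^2 and 4r + D Y^2 take more than half of the values of F. *)
Lemma binary_form_surj (t n r : F) : t * t + 4%:R * n != 0 ->
  exists a b : F, a * a + t * a * b - n * b * b = r.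
Proof.
move=> D_neq0; set D := t * t + 4%:R * n in D_neq0.
have := card_quadratic_image 0 (oner_neq0 F).
have := card_quadratic_image (4%:R * r) D_neq0.
set B := [set _ | _ : F]; set A := [set _ | _ : F] => cardB cardA.
have [z] : exists z, z \in A :&: B.
  have cardAB : (#|A :|: B| <= #|F|)%N by apply: max_card.
  apply/set0Pn; apply: contraTneq cardAB => AB0.
  by rewrite cardsU AB0 cards0 subn0 -ltnNge; lia.
rewrite inE => /andP[/imsetP[X _ ->] /imsetP[Y _ eqXY]].
have four_neq0 : 4%:R != 0 :> F.
  by rewrite (natrM F 2 2) mulf_neq0 ?two_neq0_odd_card.
exists ((X - t * Y) / 2%:R), Y.
have -> : r = (X * X - D * Y * Y) / 4%:R.
  by rewrite (_ : X * X = 4%:R * r + D * Y * Y); [field | rewrite -eqXY; ring].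
by rewrite /D; field; rewrite ?four_neq0 ?two_neq0_odd_card.
Qed.

End OddFiniteField.

Section PrimeFieldOfInt.
Variable p : nat.
Hypothesis p_pr : prime p.

Lemma Fp_intr_eq0 (z : int) : (z%:~R == 0 :> 'F_p) = (p %| `|z|)%N.
Proof.
rewrite (dvdn_pcharf (pchar_Fp p_pr)).
by case: z => n; rewrite ?NegzE ?rmorphN ?oppr_eq0.
Qed.

Lemma Fp_intr_mod (M a b : int) : (p%:Z %| M)%Z -> (a = b %[mod M])%Z ->
  a%:~R = b%:~R :> 'F_p.
Proof.
move=> dvd_pM /(eqz_mod_dvdW dvd_pM) /eqP; rewrite eqz_mod_dvd => dvd_ab.
by apply/eqP; rewrite -subr_eq0 -rmorphB Fp_intr_eq0.
Qed.

Lemma Fp_fermat (a : 'F_p) : a != 0 -> a ^+ p.-1 = 1.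
Proof. by move=> a_neq0; have := @expf_card_pred 'F_p a a_neq0; rewrite card_Fp. Qed.

Hypothesis p_odd : odd p.

Lemma odd_card_Fp : odd #|'F_p|.
Proof. by rewrite card_Fp. Qed.

Lemma Fp_half_double : (p.-1./2 + p.-1./2)%N = p.-1.
Proof. by have := @half_card_double 'F_p odd_card_Fp; rewrite card_Fp. Qed.

Lemma Fp_euler (a : 'F_p) : a != 0 -> a ^+ p.-1./2 = 1 \/ a ^+ p.-1./2 = -1.
Proof. by move=> a_neq0; have := @expf_half_card 'F_p odd_card_Fp a a_neq0; rewrite card_Fp. Qed.

End PrimeFieldOfInt.

(* chi p x is the Legendre symbol (N x / p), written additively in F_2 through
   Euler's criterion. *)
Definition normFp (d : int) (m p : nat) (x : Res m) : 'F_p := (normO d (ofRes m x))%:~R.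

Definition chi (d : int) (m p : nat) (x : Res m) : 'F_2 :=
  (normFp d p x ^+ p.-1./2 != 1)%:R.

Lemma F2_addb (b1 b2 : bool) : ((b1 (+) b2)%:R : 'F_2) = b1%:R + b2%:R.
Proof. by case: b1; case: b2 => //; apply: val_inj. Qed.

Section QuadraticCharacter.
Variables (d : int) (m p : nat).
Hypotheses (p_pr : prime p) (p_odd : odd p) (p_dvd_f : (p %| m.+1)%N).
Local Notation mulR := (mulR d m).
Local Notation unit := (unitR d m).

Lemma normFp_toRes u : normFp d p (toRes m u) = (normO d u)%:~R.
Proof.
by apply: (Fp_intr_mod p_pr (M := m.+1)); [rewrite dvdzE !absz_nat | apply/normO_mod/ofRes_toRes].
Qed.

Lemma normFpM x y : normFp d p (mulR x y) = normFp d p x * normFp d p y.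
Proof. by rewrite /mulR normFp_toRes normOM rmorphM. Qed.

Lemma normFp1 : normFp d p (oneR m) = 1.
Proof. by rewrite /oneR normFp_toRes normO1. Qed.

Lemma normFp_unit x : unit x -> normFp d p x != 0.
Proof.
case/unitRP => y xy; apply: contra_eq_neq normFp1 => Nx0.
by rewrite -xy normFpM Nx0 mul0r.
Qed.

Lemma chiM x y : unit x -> unit y -> chi d p (mulR x y) = chi d p x + chi d p y.
Proof.
move=> x_unit y_unit; rewrite /chi normFpM exprMn -F2_addb.
have N1_neq1 : -1 != 1 :> 'F_p := oppr1_neq1 (odd_card_Fp p_pr p_odd).
have [|] := Fp_euler p_pr p_odd (normFp_unit x_unit) => ->;
  have [|] := Fp_euler p_pr p_odd (normFp_unit y_unit) => ->;
  by rewrite ?mulr1 ?mul1r ?mulrNN ?eqxx ?(negbTE N1_neq1).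
Qed.

Lemma chi1 : chi d p (oneR m) = 0.
Proof. by rewrite /chi normFp1 expr1n eqxx. Qed.

Lemma chi_int (k : int) : unit (toRes m (k, 0)) -> chi d p (toRes m (k, 0)) = 0.
Proof.
move=> k_unit; have := normFp_unit k_unit.
rewrite /chi normFp_toRes normO_int rmorphXn -exprM mul2n -addnn.
by rewrite Fp_half_double // expf_eq0 /= => /Fp_fermat ->.
Qed.

End QuadraticCharacter.

Definition char_primes (d : int) (m : nat) : seq nat :=
  [seq p <- primes m.+1 | odd p && ~~ (p %| `|d|)%N].

Definition nchar (d : int) (m : nat) : nat := size (char_primes d m).

Definition Phi (d : int) (m : nat) (x : Res m) : 'rV['F_2]_(nchar d m) :=
  \row_i chi d (nth 0%N (char_primes d m) i) x.
Arguments Phi : clear implicits.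

Definition Phi_normN1 (d : int) (m : nat) : 'rV['F_2]_(nchar d m) :=
  \row_i (let p := nth 0%N (char_primes d m) i in ((-1 : 'F_p) ^+ p.-1./2 != 1)%:R).

Definition Ksub (d : int) (m : nat) : {set Res m} :=
  [set x | unitR d m x && ((Phi d m x == 0) || (Phi d m x == Phi_normN1 d m))].

Lemma int_mul_eq1 (a b : int) : a * b = 1 -> a = 1 \/ a = -1.
Proof. by rewrite mulrC => /intUnitRing.unitzPl; rewrite qualifE => /pred2P. Qed.

Section Characters.
Variables (d : int) (m : nat).
Local Notation mulR := (mulR d m).
Local Notation one := (oneR m).
Local Notation unit := (unitR d m).
Local Notation Phi := (Phi d m).
Local Notation Ksub := (Ksub d m).

Lemma char_primesP (i : 'I_(nchar d m)) (p := nth 0%N (char_primes d m) i) :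
  [/\ prime p, odd p, ~~ (p %| `|d|)%N & (p %| m.+1)%N].
Proof.
have : p \in char_primes d m by apply: mem_nth.
by rewrite mem_filter mem_primes => /andP[/andP[-> ->] /and3P[-> _ ->]].
Qed.

Lemma PhiM x y : unit x -> unit y -> Phi (mulR x y) = Phi x + Phi y.
Proof.
move=> x_unit y_unit; apply/rowP => i; rewrite !mxE.
by have [p_pr p_odd _ p_dvd] := char_primesP i; rewrite chiM.
Qed.

Lemma Phi1 : Phi one = 0.
Proof.
apply/rowP => i; rewrite !mxE.
by have [p_pr p_odd _ p_dvd] := char_primesP i; rewrite chi1.
Qed.

Lemma PhiV x y : unit x -> mulR x y = one -> Phi y = Phi x.
Proof.
move=> x_unit xy; have y_unit := mulR_eq1_unit xy.
have := Phi1; rewrite -xy PhiM // => /eqP; rewrite addr_eq0 => /eqP->.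
by apply/eqP; rewrite -addr_eq0 F2_addrr.
Qed.

Lemma Ksub1 : one \in Ksub.
Proof. by rewrite inE unitR1 Phi1 eqxx. Qed.

Lemma KsubM x y : x \in Ksub -> y \in Ksub -> mulR x y \in Ksub.
Proof.
rewrite !inE => /andP[x_unit Phix] /andP[y_unit Phiy]; rewrite unitRM // PhiM //=.
by case/orP: Phix => /eqP->; case/orP: Phiy => /eqP->;
  rewrite ?addr0 ?add0r ?F2_addrr ?eqxx ?orbT.
Qed.

Lemma Ksub_units : Ksub \subset unitsR d m.
Proof. by apply/subsetP => x; rewrite !inE => /andP[]. Qed.

Lemma intImg_units : intImg m \subset unitsR d m.
Proof.
apply/subsetP => x; rewrite !inE => /asboolP[k [k_coprime ->]].
by apply: unitR_toRes_coprime; rewrite normO_int coprimezXl // coprimezE absz_nat.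
Qed.

Lemma unitImg_units : unitImg d m \subset unitsR d m.
Proof. by apply/subsetP => x; rewrite !inE => /asboolP[u [/unitR_toRes_unitO ? ->]]. Qed.

Lemma generators_units : intImg m :|: unitImg d m \subset unitsR d m.
Proof. by rewrite subUset intImg_units unitImg_units. Qed.

Lemma intImg_Ksub : intImg m \subset Ksub.
Proof.
apply/subsetP => x x_int; have := subsetP intImg_units x x_int; rewrite !inE => x_unit.
move: x_int; rewrite inE => /asboolP[k [_ ex]]; subst x.
rewrite x_unit; apply/orP; left; apply/eqP/rowP => i; rewrite !mxE.
by have [p_pr p_odd _ p_dvd] := char_primesP i; rewrite chi_int.
Qed.

(* A unit of O_K has norm 1 or -1, whose quadratic characters are 0 and Phi_normN1. *)
Lemma unitImg_Ksub : unitImg d m \subset Ksub.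
Proof.
apply/subsetP => x x_img; have := subsetP unitImg_units x x_img; rewrite !inE => x_unit.
move: x_img; rewrite inE => /asboolP[u [[v uv] ex]]; subst x; rewrite x_unit.
have : normO d u * normO d v = 1 by rewrite -normOM uv normO1.
by case/int_mul_eq1 => Nu; apply/orP; [left | right]; apply/eqP/rowP => i;
  rewrite !mxE; have [p_pr p_odd _ p_dvd] := char_primesP i;
  rewrite /chi normFp_toRes // Nu ?expr1n ?eqxx.
Qed.

Lemma Hsub_Ksub : Hsub d m \subset Ksub.
Proof.
apply: gen_subgrp_min; apply/subgrp_closedP; split.
- exact: Ksub1.
- exact: KsubM.
- move=> x y; rewrite !inE => /andP[x_unit Phix] xy.
  by rewrite (mulR_eq1_unit xy) (PhiV x_unit xy).
- by rewrite subUset intImg_Ksub unitImg_Ksub.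
Qed.

End Characters.

Lemma qt_qn_disc (d : int) : qt d * qt d + 4 * qn d = d \/ qt d * qt d + 4 * qn d = 4 * d.
Proof.
rewrite /qt /qn; case: ifP => [/eqP d_mod4|_]; [left | by right; ring].
have d_eq : d = (d %/ 4)%Z * 4 + 1 by rewrite {1}(divz_eq d 4) d_mod4.
have -> : d - 1 = (d %/ 4)%Z * 4 by rewrite {1}d_eq addrK.
by rewrite mulzK // [RHS]d_eq; ring.
Qed.

Lemma normO_Fp_surj (d : int) (p : nat) (r : 'F_p) :
  prime p -> odd p -> ~~ (p %| `|d|)%N ->
  exists u : nat * nat, (normO d (u.1%:Z, u.2%:Z))%:~R = r.
Proof.
move=> p_pr p_odd p_ndvd_d; pose t : 'F_p := (qt d)%:~R; pose n : 'F_p := (qn d)%:~R.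
have two_neq0 := two_neq0_odd_card (odd_card_Fp p_pr p_odd).
have disc_neq0 : t * t + 4%:R * n != 0.
  have -> : t * t + 4%:R * n = (qt d * qt d + 4 * qn d)%:~R.
    by rewrite !rmorphD !rmorphM.
  have d_neq0 : d%:~R != 0 :> 'F_p by rewrite Fp_intr_eq0.
  case: (qt_qn_disc d) => -> //; rewrite rmorphM mulf_neq0 //.
  by rewrite -[_ != _]/(4%:R != 0 :> 'F_p) (natrM _ 2 2) mulf_neq0.
have [a [b ab_r]] := binary_form_surj (odd_card_Fp p_pr p_odd) r disc_neq0.
have intr_val (c : 'F_p) : ((val c)%:Z)%:~R = c := natr_Zp c.
exists (val a, val b).
by rewrite /normO /= -ab_r !(rmorphB, rmorphD, rmorphM) /= !intr_val.
Qed.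

Lemma exists_eqO_mod_crt (p M a b : nat) : coprime p M ->
  exists u : int * int, eqO_mod p u (a%:Z, b%:Z) /\ eqO_mod M u (1, 0).
Proof.
move=> coprime_pM; exists ((chinese p M a 1)%:Z, (chinese p M b 0)%:Z).
by split; split; apply: eqz_mod_nat; rewrite ?chinese_modl ?chinese_modr.
Qed.

Lemma coprimez_mod_part (N : int) (n p : nat) : prime p -> (0 < n)%N ->
  ~~ (p %| `|N|)%N -> (N = 1 %[mod (n`_p^')%N])%Z -> coprimez N n.
Proof.
move=> p_pr n_gt0 p_ndvd_N N_mod.
rewrite -(partnC p n_gt0) PoszM coprimezMr; apply/andP; split.
  by rewrite coprimezE absz_nat p_part coprime_sym coprimeXl // prime_coprime.
by rewrite /coprimez -gcdz_modl N_mod gcdz_modl gcd1z.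
Qed.

Section Surjectivity.
Variables (d : int) (m : nat).
Local Notation mulR := (mulR d m).
Local Notation one := (oneR m).
Local Notation unit := (unitR d m).
Local Notation Phi := (Phi d m).
Local Notation s := (nchar d m).

(* A unit whose norm is a non-residue mod p and 1 modulo the prime-to-p part of f. *)
Lemma Phi_delta (i : 'I_s) : exists2 x, unit x & Phi x = delta_mx 0 i.
Proof.
set p := nth 0%N (char_primes d m) i.
have [p_pr p_odd p_ndvd_d p_dvd_f] := char_primesP i.
have [r r_nonres] := exists_non_residue (odd_card_Fp p_pr p_odd).
have e_gt0 := half_card_gt0 (odd_card_Fp p_pr p_odd).
rewrite card_Fp // in r_nonres e_gt0.
have [[a b] ab_r] := normO_Fp_surj r p_pr p_odd p_ndvd_d.
set M := ((m.+1)`_p^')%N.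
have coprime_pM : coprime p M := pnat_coprime (pnat_id p_pr) (part_pnat _ _).
have [u [u_p u_M]] := exists_eqO_mod_crt a b coprime_pM.
have Nu_p : (normO d u)%:~R = r :> 'F_p.
  by rewrite -ab_r; apply: (Fp_intr_mod p_pr (dvdzz _)); apply: normO_mod.
have Nu_M : (normO d u = 1 %[mod M])%Z by rewrite -(normO1 d); apply: normO_mod.
exists (toRes m u).
  apply/unitR_toRes_coprime/(coprimez_mod_part p_pr) => //.
  rewrite -Fp_intr_eq0 // Nu_p; apply: contra_eq_neq r_nonres => ->.
  by rewrite expr0n gtn_eqF // eq_sym oppr_eq0 oner_eq0.
apply/rowP => j; rewrite !mxE eqxx /=.
have [q_pr _ _ q_dvd_f] := char_primesP j.
have [->|neq_ji] := eqVneq j i.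
  by rewrite /chi normFp_toRes // Nu_p r_nonres oppr1_neq1 ?odd_card_Fp.
set q := nth 0%N (char_primes d m) j in q_pr q_dvd_f *.
have neq_qp : q != p.
  by rewrite /q /p nth_uniq ?ltn_ord // filter_uniq ?primes_uniq.
have q_dvd_M : (q %| M)%N.
  have : (q %| (m.+1)`_p * M)%N by rewrite partnC.
  rewrite Gauss_dvdr // p_part; apply: coprimeXr.
  by rewrite prime_coprime // dvdn_prime2.
rewrite /chi normFp_toRes //.
by rewrite (Fp_intr_mod q_pr (b := 1) (M := M)) ?dvdzE ?absz_nat // expr1n eqxx.
Qed.

Lemma Phi_surj v : exists2 x, unit x & Phi x = v.
Proof.
rewrite (row_sum_delta v); apply: (big_ind (fun v => exists2 x, unit x & Phi x = v)).
- by exists one; rewrite ?unitR1 ?Phi1.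
- move=> _ _ [x1 x1_unit <-] [x2 x2_unit <-].
  by exists (mulR x1 x2); rewrite ?unitRM ?PhiM.
- move=> i _; case: (F2_cases (v 0 i)) => ->; rewrite ?scale0r ?scale1r.
    by exists one; rewrite ?unitR1 ?Phi1.
  exact: Phi_delta.
Qed.

Definition Phi_fibre (v : 'rV['F_2]_s) : {set Res m} := [set x | unit x && (Phi x == v)].

Lemma card_Phi_fibre_le v w : (#|Phi_fibre v| <= #|Phi_fibre w|)%N.
Proof.
have [g g_unit Phig] := Phi_surj (w + v).
rewrite -(card_in_imset (in2W (mulRI g_unit))); apply/subset_leq_card/subsetP => y.
case/imsetP => x; rewrite !inE => /andP[x_unit /eqP Phix] ->.
by rewrite unitRM // PhiM // Phig Phix -addrA F2_addrr addr0 eqxx.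
Qed.

Lemma card_units_fibre : #|unitsR d m| = (2 ^ s * #|Phi_fibre 0|)%N.
Proof.
rewrite -sum1_card (partition_big Phi xpredT) //=.
rewrite (eq_bigr (fun _ => #|Phi_fibre 0|)) ?sum_nat_const ?card_mx ?card_Fp ?mul1n //.
move=> v _; rewrite sum1_card; transitivity #|Phi_fibre v|.
  by apply: eq_card => x; rewrite -topredE /= !inE.
by apply/eqP; rewrite eqn_leq !card_Phi_fibre_le.
Qed.

Lemma card_Ksub : (2 ^ s * #|Ksub d m| <= 2 * (m.+1 * m.+1))%N.
Proof.
have card_K : (#|Ksub d m| <= 2 * #|Phi_fibre 0|)%N.
  apply: (@leq_trans #|Phi_fibre 0 :|: Phi_fibre (Phi_normN1 d m)|).
    apply/subset_leq_card/subsetP => x; rewrite !inE.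
    by case/andP=> -> /orP[] ->; rewrite ?orbT.
  by rewrite (leq_trans (leq_card_setU _ _)) // mul2n -addnn leq_add2l card_Phi_fibre_le.
have card_units : (#|unitsR d m| <= m.+1 * m.+1)%N.
  by rewrite (leq_trans (max_card _)) // card_prod card_ord.
rewrite card_units_fibre in card_units.
apply: (leq_trans (leq_mul (leqnn _) card_K)).
by rewrite mulnCA leq_mul2l card_units orbT.
Qed.

End Surjectivity.

Local Close Scope ring_scope.

Lemma prod_if (P : pred nat) (r : seq nat) a b :
  \prod_(p <- r) (if P p then a else b) = a ^ count P r * b ^ count (predC P) r.
Proof.
elim: r => [|x r IHr]; first by rewrite big_nil.
by rewrite big_cons IHr /=; case: (P x); rewrite /= ?expnS; ring.
Qed.

(* Each prime factor p contributes 1 - 1/p >= 2/3 to totient n / n when p is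
   odd and >= 1/2 in any case. *)
Lemma totient_lower_bound (G : pred nat) n : 0 < n ->
  {in primes n, forall p, G p -> odd p} ->
  n * 2 ^ count G (primes n) <=
    totient n * (3 ^ count G (primes n) * 2 ^ count (predC G) (primes n)).
Proof.
move=> n_gt0 G_odd; set r := primes n.
have -> : 2 ^ count G r = \prod_(p <- r) (if G p then 2 else 1).
  by rewrite prod_if exp1n muln1.
rewrite -prod_if {1}(prod_prime_decomp n_gt0) prime_decompE big_map totientE // -/r.
rewrite -!big_split /= big_seq [leqRHS]big_seq; apply: leq_prod => p p_r.
have /and3P[p_pr _ _] : [&& prime p, 0 < n & p %| n] by rewrite -mem_primes.
have := p_r; rewrite -logn_gt0 => /prednK <-.
rewrite expnS mulnAC [leqRHS]mulnAC leq_mul2r; apply/orP; right.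
have p_gt1 := prime_gt1 p_pr.
case G_p: (G p); last lia.
by have := odd_prime_gt2 (G_odd p p_r G_p) p_pr; lia.
Qed.

Lemma count_ramified_primes (d : int) n : d != 0%R ->
  count (predC (fun p => odd p && ~~ (p %| `|d|))) (primes n) <= size (primes (2 * `|d|)).
Proof.
move=> d_neq0; rewrite -size_filter uniq_leq_size ?filter_uniq ?primes_uniq // => p.
rewrite mem_filter !mem_primes /= negb_and negbK muln_gt0 absz_gt0 d_neq0.
case/andP=> /orP[p_even|p_dvd_d] /and3P[p_pr _ _]; rewrite p_pr //=.
  by rewrite (prime_oddPn p_pr p_even) dvdn_mulr.
by rewrite dvdn_mull.
Qed.

Lemma totient_char_primes (d : int) m : d != 0%R ->
  m.+1 * 2 ^ nchar d m <= totient m.+1 * (3 ^ nchar d m * 2 ^ size (primes (2 * `|d|))).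
Proof.
move=> d_neq0; rewrite /nchar /char_primes size_filter.
apply: leq_trans (totient_lower_bound _ _) _ => // [p _ /andP[]//|].
by rewrite !leq_mul2l leq_pexp2l ?count_ramified_primes ?orbT.
Qed.

Section PreClassGroup.
Variables (d : int) (m : nat).
Local Notation mulR := (mulR d m).
Local Notation unit := (unitR d m).
Local Notation class := (preCl_class d m).

Lemma totient_le_card_Zsub : totient m.+1 <= #|Zsub d m|.
Proof.
have totient_card : totient m.+1 = #|[pred i : 'I_m.+1 | coprime m.+1 i]|.
  rewrite totient_count_coprime big_mkord -sum1_card [RHS]big_mkcond.
  by apply: eq_bigr => i _; rewrite inE; case: coprime.
have int_inj : injective (fun i : 'I_m.+1 => toRes m (Posz i, 0%R)).
  move=> i j /(congr1 (fun x => val x.1)) /=.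
  by rewrite !modz_nat !absz_nat !modn_small // => /val_inj.
rewrite totient_card -(card_imset _ int_inj) subset_leq_card //.
apply/subsetP => _ /imsetP[i i_coprime ->]; apply: (subsetP (sub_gen_subgrp _ _)).
by rewrite inE; apply/asboolP; exists (Posz i); rewrite absz_nat coprime_sym.
Qed.

Lemma preCl_classE x : class x = [set mulR x z | z in Zsub d m].
Proof.
apply/setP => y; rewrite inE; apply/existsP/imsetP => [[z /andP[zZ /eqP->]]|[z zZ ->]].
  by exists z.
by exists z; rewrite zZ eqxx.
Qed.

Lemma card_preCl_class x : unit x -> #|class x| = #|Zsub d m|.
Proof. by move=> x_unit; rewrite preCl_classE card_in_imset // => ? ? _ _ /mulRI->. Qed.

Lemma preCl_class_sub x y : unit x -> unit y ->
  class x :&: class y != set0 -> class x \subset class y.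
Proof.
move=> x_unit y_unit /set0Pn[w]; rewrite !preCl_classE inE.
case/andP=> /imsetP[z1 z1Z ->] /imsetP[z2 z2Z xz1_yz2].
have [z1' z1z1' z1'Z] := gen_subgrp_inv (intImg_units d m) z1Z.
apply/subsetP => _ /imsetP[z zZ ->]; apply/imsetP.
exists (mulR z2 (mulR z1' z)); first by apply: gen_subgrpM => //; apply: gen_subgrpM.
by rewrite mulRA -xz1_yz2 -mulRA [mulR z1 _]mulRA z1z1' mul1R.
Qed.

Lemma unit_preCl_class_sub x : x \in unitImg d m -> class x \subset Hsub d m.
Proof.
move=> x_img; rewrite preCl_classE; apply/subsetP => _ /imsetP[z zZ ->].
apply: gen_subgrpM; first by apply: (subsetP (sub_gen_subgrp _ _)); rewrite inE x_img orbT.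
exact: (subsetP (gen_subgrpS _ (subsetUl _ _))).
Qed.

(* The classes of units of O_K are disjoint cosets of Z_f inside H_f. *)
Lemma ell_card_Zsub_le : ell d m * #|Zsub d m| <= #|Hsub d m|.
Proof.
set P := [set class x | x in unitImg d m].
have img_unit x : x \in unitImg d m -> unit x.
  by move/(subsetP (unitImg_units d m)); rewrite inE.
have P_triv : trivIset P.
  apply/trivIsetP => _ _ /imsetP[x x_img ->] /imsetP[y y_img ->].
  rewrite -setI_eq0; apply: contraR => meet.
  by rewrite eqEsubset !preCl_class_sub ?img_unit // setIC.
have card_cover : #|cover P| = \sum_(A in P) #|A|.
  by have := leq_card_cover P; rewrite P_triv => -[_ /eqP].
have -> : ell d m * #|Zsub d m| = #|cover P|.
  rewrite card_cover /ell -/P -sum_nat_const; apply: eq_bigr => _ /imsetP[x x_img ->].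
  by rewrite card_preCl_class ?img_unit.
apply/subset_leq_card/bigcupsP => _ /imsetP[x x_img ->].
exact: unit_preCl_class_sub.
Qed.

Lemma ell_gt0 : 0 < ell d m.
Proof.
apply/card_gt0P; exists (class (oneR m)); apply/imsetP; exists (oneR m) => //.
by rewrite inE; apply/asboolP; exists (1, 0)%R; split => //; exists (1, 0)%R; rewrite mul1O.
Qed.

End PreClassGroup.

Lemma Phi_prodR d m t : all (unitR d m) t ->
  Phi d m (prodR d m t) = (\sum_(v <- map (Phi d m) t) v)%R.
Proof.
elim: t => [_|x t IHt /= /andP[x_unit t_units]]; first by rewrite big_nil Phi1.
by rewrite big_cons -IHt // PhiM // prodR_unit.
Qed.

(* Blocks of nchar + 1 units have a subproduct in K_f (a zero sum of their
   characters), and K_f / H_f has at most #|K_f| / #|H_f| elements. *)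
Lemma davenport_prinCl_le_index d m :
  davenport_prinCl d m <= (nchar d m).+1 * (#|Ksub d m| %/ #|Hsub d m|).
Proof.
have H_gt0 : 0 < #|Hsub d m| by apply/card_gt0P; exists (oneR m); apply: gen_subgrp1.
have HK := Hsub_Ksub d m.
apply: davenport_prinCl_le; first by rewrite muln_gt0 divn_gt0 ?subset_leq_card.
move=> s size_s s_units; apply: (subprod_in_blocks (K := Ksub d m) _ _ size_s s_units).
  move=> t size_t t_units; have size_Phit : size (map (Phi d m) t) = (nchar d m).+1.
    by rewrite size_map.
  have [msk [size_msk has_msk sum_msk]] := F2_zero_subsum size_Phit.
  exists msk; rewrite size_t; split => //.
  by rewrite inE prodR_unit ?all_mask //= Phi_prodR ?all_mask // map_mask sum_msk eqxx.
move=> t size_t tK; apply: (subprod_in_pigeonhole (generators_units d m) HK) => //.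
- exact: Ksub_units.
- exact: Ksub1.
- exact: KsubM.
- by rewrite size_t ltn_ceil.
Qed.

Lemma leq_succ_exp3_exp4 s : s.+1 * 3 ^ s <= 4 * 4 ^ s.
Proof.
suff : (s + 4) * 3 ^ s <= 4 * 4 ^ s by apply: leq_trans; apply: leq_mul => //; lia.
elim: s => [//|s IHs]; have : 3 ^ s <= 4 ^ s by case: s {IHs} => // s; rewrite leq_exp2r.
rewrite !expnS; nia.
Qed.

(* Multiply the four bounds, cancel phi and 4^s, and use (s+1) 3^s <= 4^(s+1). *)
Lemma davenport_arith (D l phi h k s f c : nat) : 0 < phi ->
  D <= s.+1 * (k %/ h) -> l * phi <= h -> 2 ^ s * k <= 2 * (f * f) ->
  f * 2 ^ s <= phi * (3 ^ s * c) -> D * l <= 8 * c * f.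
Proof.
move=> phi_gt0 le_D le_h le_k le_f.
have le_Dlphi : D * l * phi <= s.+1 * k.
  rewrite -mulnA (leq_trans (leq_mul le_D (leqnn _))) // -mulnA leq_mul2l.
  by rewrite (leq_trans (leq_mul (leqnn _) le_h)) ?leq_divM ?orbT.
set X := 2 ^ s; set Y := 3 ^ s.
rewrite -(@leq_pmul2r (phi * (X * X))) ?muln_gt0 ?phi_gt0 ?expn_gt0 //.
apply: (@leq_trans (s.+1 * k * (X * X))); first by rewrite mulnA leq_mul2r le_Dlphi orbT.
apply: (@leq_trans (s.+1 * X * (2 * (f * f)))).
  by rewrite (_ : _ * (X * X) = s.+1 * X * (X * k)) ?leq_mul2l ?le_k ?orbT //; ring.
apply: (@leq_trans (2 * f * s.+1 * (phi * (Y * c)))).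
  by rewrite (_ : _ * (2 * _) = 2 * f * s.+1 * (f * X)) ?leq_mul2l ?le_f ?orbT //; ring.
rewrite (_ : _ * (phi * (Y * c)) = 2 * f * phi * c * (s.+1 * Y)); last by ring.
rewrite (_ : _ * (phi * (X * X)) = 2 * f * phi * c * (4 * (X * X))); last by ring.
by rewrite leq_mul2l -expnMn leq_succ_exp3_exp4 orbT.
Qed.

Lemma davenport_ell_bound d m : d != 0%R ->
  davenport_prinCl d m * ell d m <= 8 * 2 ^ size (primes (2 * `|d|)) * m.+1.
Proof.
move=> d_neq0; apply: (davenport_arith (totient_gt0 m.+1) (davenport_prinCl_le_index d m)).
- exact: leq_trans (leq_mul (leqnn _) (totient_le_card_Zsub d m)) (ell_card_Zsub_le d m).
- exact: card_Ksub.
- exact: totient_char_primes.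
Qed.

Local Open Scope ring_scope.

Theorem proposition3p1 (d : int) (hd : quad_field_disc d) :
  exists C : rat, 0 < C /\
    forall m : nat,
      (davenport_prinCl d m)%:R <= C * (m.+1)%:R / (ell d m)%:R.
Proof.
have [d_neq0 _ _] := hd.
exists (8 * 2 ^ size (primes (2 * `|d|)))%N%:R; split.
  by rewrite ltr0n muln_gt0 expn_gt0.
move=> m; have ell_pos : 0 < (ell d m)%:R :> rat by rewrite ltr0n ell_gt0.
by rewrite ler_pdivlMr // -!natrM ler_nat davenport_ell_bound.
Qed.
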